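(* Let $n\ge2$, $\mathbb{Z}_n=\mathbb{Z}/n\mathbb{Z}$, $\mathcal{P}=\{(x_1,\dots,x_{n-1})\in\mathbb{Z}_n^{n-1}\mid x_1,\dots,x_{n-1}\text{ pairwise different}\}$ and $\mathcal{S}=\{r\in\mathbb{Z}_n^{n-1}\mid\exists\,x,y\in\mathcal{P}: r=x+y\}$. If $r=(r_1,\dots,r_{n-1})\in\mathbb{Z}_n^{n-1}$ satisfies $|\{r_1,\dots,r_{n-1}\}|\le2$, then $r\in\mathcal{S}$. *)

From mathcomp Require Import all_boot all_algebra.
Set Implicit Arguments. Unset Strict Implicit. Unset Printing Implicit Defensive.
Import GRing.Theory.
Local Open Scope ring_scope.

(* Z_n^{n-1}: finite functions from 'I_(n.-1) (indices 1..n-1, shifted to 0..n-2) to 'Z_n *)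
Definition vecZ (n : nat) := {ffun 'I_n.-1 -> 'Z_n}.

Definition inP (n : nat) (x : vecZ n) : Prop := injective x.

Definition inS (n : nat) (r : vecZ n) : Prop :=
  exists x y : vecZ n, inP x /\ inP y /\ forall i, r i = x i + y i.

From mathcomp Require Import all_boot all_algebra zify.
Set Implicit Arguments. Unset Strict Implicit. Unset Printing Implicit Defensive.
Import GRing.Theory.

(* Write a for the value taken by r on the index set A and b for the other
   one.  We need an injective x such that r - x is injective; the only danger
   is x j = x i + (b - a) for i in A and j outside A.  Since n - 1 < n, it
   suffices to take the values of x on A in a k-element set X that the shift
   by b - a maps into X plus one point c outside X, and the remaining values
   outside X and c.  Such an X is built greedily: add c to X, and take the
   new c to be the image of the old one, or any fresh point if that image
   already lies in the enlarged set. *)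

Lemma exists_almost_stable_set (T : finType) (s : T -> T) (k : nat) :
  k < #|T| -> exists X : {set T}, exists c,
    [/\ c \notin X, #|X| = k & s @: X \subset c |: X].
Proof.
elim: k => [|k IHk] ltkT.
  have [c _] := card_gt0P ltkT.
  by exists set0, c; rewrite inE cards0 imset0 sub0set.
have [X [c [cX cardX sX]]] := IHk (ltnW ltkT).
have cardU : #|c |: X| = k.+1 by rewrite cardsU1 cX cardX.
have sU : s @: (c |: X) = s c |: s @: X by rewrite imsetU1.
case: (boolP (s c \in c |: X)) => scU; last first.
  by exists (c |: X), (s c); rewrite cardU sU setUS.
have [y] : exists y, y \in ~: (c |: X).
  by apply/card_gt0P; move: (cardsC (c |: X)) ltkT; rewrite cardU; lia.
rewrite inE => yU; exists (c |: X), y; split=> //.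
apply: subset_trans (subsetU1 _ _).
by rewrite sU subUset sub1set scU.
Qed.

Lemma exists_injective_into (I T : finType) (x0 : T) (A : {set I}) (X : {set T}) :
  #|A| <= #|X| -> exists2 f : I -> T, {in A &, injective f} & {in A, forall i, f i \in X}.
Proof.
move=> leAX; have sizeA i : i \in A -> index i (enum A) < size (enum X).
  by move=> iA; rewrite -cardE (leq_trans _ leAX) // cardE index_mem mem_enum.
exists (fun i => nth x0 (enum X) (index i (enum A))) => [i j iA jA /eqP|i iA].
  rewrite nth_uniq ?sizeA ?enum_uniq // => /eqP.
  by apply: (index_inj i); rewrite mem_enum.
by rewrite -mem_enum mem_nth ?sizeA.
Qed.

Lemma exists_injective_split (I T : finType) (x0 : T) (A : {set I}) (X Y : {set T}) :
  [disjoint X & Y] -> #|A| <= #|X| -> #|~: A| <= #|Y| ->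
  exists2 f : I -> T, injective f &
    {in A, forall i, f i \in X} /\ {in ~: A, forall i, f i \in Y}.
Proof.
move=> dXY /(exists_injective_into x0) [fA fA_inj fAX].
move=> /(exists_injective_into x0) [fB fB_inj fBY].
have fAB i j : i \in A -> j \notin A -> fA i != fB j.
  move=> iA jA; apply: contraTneq (fBY j _) => [<-|]; last by rewrite inE.
  by rewrite (disjointFr dXY) ?fAX.
exists (fun i => if i \in A then fA i else fB i); last first.
  by split=> i iA; rewrite ?iA ?fAX //; move: (iA); rewrite inE => /negPf->; apply: fBY.
move=> i j; case: (boolP (i \in A)) => iA; case: (boolP (j \in A)) => jA.
- exact: fA_inj.
- by move/eqP; rewrite (negPf (fAB _ _ iA jA)).
- by move/esym/eqP; rewrite (negPf (fAB _ _ jA iA)).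
- by apply: fB_inj; rewrite inE.
Qed.

Local Open Scope ring_scope.

Lemma injective_sub_two_valued (I : finType) (V : zmodType) (A : {set I}) (a b : V)
    (r f : I -> V) :
  (forall i, r i = if i \in A then a else b) -> injective f ->
  {in A & ~: A, forall i j, f j - f i != b - a} ->
  injective (fun i => r i - f i).
Proof.
move=> hr f_inj fAB i j; rewrite !hr.
have mixed i' j' : i' \in A -> j' \notin A -> a - f i' != b - f j'.
  move=> i'A j'A; apply: contra (fAB i' j' i'A _); last by rewrite inE.
  move/eqP=> e; apply/eqP; have -> : a = b - f j' + f i' by rewrite -e subrK.
  by rewrite opprD addrA opprB addrCA subrr addr0.
case: (boolP (i \in A)) => iA; case: (boolP (j \in A)) => jA.
- by move/addrI/oppr_inj/f_inj.
- by move/eqP; rewrite (negPf (mixed _ _ iA jA)).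
- by move/esym/eqP; rewrite (negPf (mixed _ _ jA iA)).
- by move/addrI/oppr_inj/f_inj.
Qed.

Lemma two_valued_of_card_imset_le2 (I T : finType) (r : I -> T) (i0 : I) :
  (#|[set r i | i : I]| <= 2)%N -> exists b, forall i, r i = if r i == r i0 then r i0 else b.
Proof.
move=> le2; case: (pickP (fun i => r i != r i0)) => [i1 ri1 | r_const]; last first.
  by exists (r i0) => i; rewrite if_same; apply/eqP/negbFE/r_const.
exists (r i1) => i; case: eqP => // /eqP ri; apply/eqP/negPn/negP => rii1.
have : [set r i0; r i1; r i] \subset [set r i | i : I].
  by apply/subsetP => u; rewrite !inE => /orP[/orP[]|] /eqP->; apply: imset_f.
move/subset_leq_card/leq_trans/(_ le2).
by rewrite setUC cardsU1 cards2 !inE (negPf ri) (negPf rii1) eq_sym ri1.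
Qed.

Theorem proposition5p2 (n : nat) (hn : (1 < n)%N) (r : vecZ n) :
  (#|[set r i | i : 'I_n.-1]| <= 2)%N -> inS r.
Proof.
move=> le2; have n1_gt0 : (0 < n.-1)%N by rewrite -ltnS prednK // ltnW.
pose a := r (Ordinal n1_gt0); have [b hb] := two_valued_of_card_imset_le2 (Ordinal n1_gt0) le2.
pose A := [set i | r i == a].
have hr i : r i = if i \in A then a else b by rewrite inE [LHS]hb.
have cardZ : #|'Z_n| = n by rewrite card_ord Zp_cast.
have [|X [c [cX cardX sX]]] := exists_almost_stable_set (+%R^~ (b - a)) (k := #|A|).
  by rewrite cardZ (leq_ltn_trans (max_card _)) // card_ord ltn_predL ltnW.
have [|||x x_inj [xA xB]] := exists_injective_split 0 (A := A) (X := X) (Y := ~: (c |: X)).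
- by rewrite disjoints_subset setCK subsetU1.
- by rewrite cardX.
- rewrite [X in (X <= _)%N]cardsCs [X in (_ <= X)%N]cardsCs !setCK.
  by rewrite cardsU1 cX cardZ card_ord cardX /=; lia.
have y_inj : injective (fun i => r i - x i).
  apply: injective_sub_two_valued hr x_inj _ => i j iA jA.
  move: (xB j jA); rewrite inE; apply: contraNneq.
  move/eqP; rewrite subr_eq addrC => /eqP->.
  by apply/(subsetP sX)/imsetP; exists (x i) => //; exact: xA.
exists [ffun i => x i], [ffun i => r i - x i]; split; last split.
- by move=> i j; rewrite !ffunE => /x_inj.
- by move=> i j; rewrite !ffunE => /y_inj.
- by move=> i; rewrite !ffunE addrC subrK.
Qed.
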